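(* For $x\in\mathbb{R}$ let \[ H(x)=\begin{bmatrix}1 & -ix & ix & x\\ ix & 1 & -ix & x\\ -ix & ix & 1 & x\\ x & x & x & 1\end{bmatrix}. \] For $x=1/\sqrt{3}$, the matrix $H(x)$ has rank $2$ and spans an extremal ray of the cone $\mathcal{M}_4^+[e]$.
   Context: $\mathcal{M}_4^+[e]$ is the cone of $4\times4$ complex positive semidefinite matrices whose diagonal entries are all equal (complex correlation matrices up to scaling). An extremal ray of a cone $\mathcal{C}$ is $\mathbb{R}_+v$, $v\ne0$, such that $v=a+b$ with $a,b\in\mathcal{C}$ implies $a,b\in\mathbb{R}_+v$. *)

From mathcomp Require Import all_boot all_algebra.
From mathcomp Require Import complex.
From mathcomp Require Import reals.
Import GRing.Theory Num.Theory.
Local Open Scope ring_scope.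

Set Implicit Arguments.
Unset Strict Implicit.
Unset Printing Implicit Defensive.

Definition ctrmx (C : numClosedFieldType) m n (A : 'M[C]_(m, n)) : 'M[C]_(n, m) :=
  \matrix_(i, j) (A j i)^*.

Definition psdmx (C : numClosedFieldType) n (A : 'M[C]_n) : Prop :=
  ctrmx A = A /\ forall v : 'cV[C]_n, 0 <= (ctrmx v *m A *m v) 0 0.

Definition Mplus_e (C : numClosedFieldType) n (A : 'M[C]_n) : Prop :=
  psdmx A /\ forall i j : 'I_n, A i i = A j j.

Definition in_ray (R : realType) n (v a : 'M[R[i]]_n) : Prop :=
  exists t : R, 0 <= t /\ a = (t%:C)%C *: v.

Definition extremal_ray (R : realType) n (K : 'M[R[i]]_n -> Prop)
    (v : 'M[R[i]]_n) : Prop :=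
  K v /\ v != 0 /\
  forall a b : 'M[R[i]]_n, K a -> K b -> v = a + b -> in_ray v a /\ in_ray v b.

Definition Hmx (R : realType) (x : R) : 'M[R[i]]_4 :=
  let X : R[i] := (x%:C)%C in
  let I : R[i] := 'i%C in
  let rows : seq (seq R[i]) :=
    [:: [:: 1; - (I * X); I * X; X];
        [:: I * X; 1; - (I * X); X];
        [:: - (I * X); I * X; 1; X];
        [:: X; X; X; 1]] in
  \matrix_(r < 4, c < 4) nth 0 (nth [::] rows r) c.

From mathcomp Require Import all_boot all_algebra.
From mathcomp Require Import complex.
From mathcomp Require Import reals.
From mathcomp Require Import order ring.
Import Order.TTheory GRing.Theory Num.Theory.
Local Open Scope ring_scope.

Set Implicit Arguments.
Unset Strict Implicit.
Unset Printing Implicit Defensive.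

(* With s = sqrt 3, H := H(s/3) factors as H = W Z with Z W = 2 I_2, so H/2 is
   the orthogonal projection onto the span of the two columns of W, and H has
   rank 2.  The columns of K span ker H, and K Y = 1 - H/2.
   If H = A + B with A, B positive semidefinite, then A kills ker H, so
   A = (H/2) A (H/2) = W N Z for some 2 x 2 matrix N.  The map N |-> diag (W N Z)
   has an explicit left inverse, so if the diagonal of A is constant, equal to t,
   then N = t I_2 and A = t H. *)

Section ConjTranspose.
Variable C : numClosedFieldType.

Lemma ctrmxK m n (A : 'M[C]_(m, n)) : ctrmx (ctrmx A) = A.
Proof. by apply/matrixP => i j; rewrite !mxE conjCK. Qed.

Lemma ctrmxD m n (A B : 'M[C]_(m, n)) : ctrmx (A + B) = ctrmx A + ctrmx B.
Proof. by apply/matrixP => i j; rewrite !mxE rmorphD. Qed.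

Lemma ctrmxZ m n a (A : 'M[C]_(m, n)) : ctrmx (a *: A) = a^* *: ctrmx A.
Proof. by apply/matrixP => i j; rewrite !mxE rmorphM. Qed.

Lemma ctrmx_mul m n p (A : 'M[C]_(m, n)) (B : 'M[C]_(n, p)) :
  ctrmx (A *m B) = ctrmx B *m ctrmx A.
Proof.
apply/matrixP => i j; rewrite !mxE rmorph_sum; apply: eq_bigr => k _.
by rewrite !mxE rmorphM mulrC.
Qed.

Lemma ctrmx_delta m n i j : ctrmx (delta_mx i j : 'M[C]_(m, n)) = delta_mx j i.
Proof. by apply/matrixP => k l; rewrite !mxE rmorph_nat andbC. Qed.

Lemma cnorm_ge0 n (u : 'cV[C]_n) : 0 <= (ctrmx u *m u) 0 0.
Proof. by rewrite mxE; apply: sumr_ge0 => i _; rewrite !mxE mulrC mul_conjC_ge0. Qed.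

End ConjTranspose.

Section PositiveSemidefinite.
Variable C : numClosedFieldType.

Lemma psd_diag_ge0 n (A : 'M[C]_n) i : psdmx A -> 0 <= A i i.
Proof. by case=> _ /(_ (delta_mx i 0)); rewrite ctrmx_delta -rowE -colE !mxE. Qed.

Lemma psd_hermitian_sqr n (H : 'M[C]_n) c :
  0 < c -> ctrmx H = H -> H *m H = c *: H -> psdmx H.
Proof.
move=> c_gt0 hH HH; split=> // v.
have -> : ctrmx v *m H *m v = c^-1 *: (ctrmx (H *m v) *m (H *m v)).
  rewrite ctrmx_mul hH !mulmxA -(mulmxA _ H H) HH -scalemxAr -scalemxAl.
  by rewrite scalerA mulVf ?scale1r // gt_eqF.
by rewrite mxE mulr_ge0 ?cnorm_ge0 // invr_ge0 ltW.
Qed.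

Lemma psd_quad_eq0 n (A : 'M[C]_n) (v : 'cV[C]_n) :
  psdmx A -> (ctrmx v *m A *m v) 0 0 = 0 -> A *m v = 0.
Proof.
move=> [hA A_ge0] qv0.
have form0 (w : 'cV[C]_n) : (ctrmx w *m A *m v) 0 0 = 0.
  set c := (ctrmx w *m A *m v) 0 0; set d := (ctrmx w *m A *m w) 0 0.
  have c_conj : (ctrmx v *m A *m w) 0 0 = c^*.
    transitivity ((ctrmx (ctrmx w *m A *m v)) 0 0); last by rewrite mxE.
    by rewrite !ctrmx_mul ctrmxK hA mulmxA.
  have d1_gt0 : 0 < d + 1 by rewrite ltr_wpDl ?A_ge0.
  pose t := (d + 1)^-1.
  have t_gt0 : 0 < t by rewrite invr_gt0.
  have tdt2_lt0 : t * (t * d - 2) < 0.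
    rewrite pmulr_rlt0 // subr_lt0 (@lt_trans _ _ 1) ?ltr1n //.
    by rewrite mulrC ltr_pdivrMr // mul1r ltrDl.
  (* At [v - t c w] the form is [|c|^2 t (t d - 2)], where [t (t d - 2) < 0]. *)
  have := A_ge0 (v + (- t * c) *: w).
  rewrite ctrmxD ctrmxZ !mulmxDl !mulmxDr -!scalemxAl -!scalemxAr.
  rewrite ![(_ + _ : 'M_1) 0 0]mxE ![(_ *: _ : 'M_1) 0 0]mxE qv0 c_conj -/c -/d.
  have -> : (- t * c)^* = - t * c^*.
    by rewrite rmorphM rmorphN; congr (- _ * _); exact: geC0_conj (ltW t_gt0).
  rewrite (_ : _ + _ = c * c^* * (t * (t * d - 2))); last by ring.
  rewrite nmulr_lge0 // => cc_le0.
  by apply/eqP; rewrite -mul_conjC_eq0 eq_le cc_le0 mul_conjC_ge0.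
apply/matrixP => i j; rewrite (ord1 j) [RHS]mxE.
by move: (form0 (delta_mx i 0)); rewrite ctrmx_delta -mulmxA -rowE mxE.
Qed.

Lemma psdD_mul_eq0 n p (A B : 'M[C]_n) (V : 'M[C]_(n, p)) :
  psdmx A -> psdmx B -> (A + B) *m V = 0 -> A *m V = 0.
Proof.
move=> psdA psdB ABV0.
have Acol0 j : A *m col j V = 0.
  apply: (psd_quad_eq0 psdA); apply/eqP.
  have : (ctrmx (col j V) *m (A + B) *m col j V) 0 0 == 0.
    by rewrite -mulmxA colE (mulmxA (A + B)) ABV0 mul0mx mulmx0 mxE.
  by rewrite mulmxDr mulmxDl mxE (paddr_eq0 (psdA.2 _) (psdB.2 _)) => /andP[].
apply/matrixP => i j; move/matrixP/(_ i 0): (Acol0 j).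
by rewrite colE mulmxA -colE !mxE.
Qed.

Lemma hermitian_proj_sandwich n p (A P : 'M[C]_n) (K : 'M[C]_(n, p)) Y :
  ctrmx A = A -> ctrmx P = P -> K *m Y = 1%:M - P -> A *m K = 0 ->
  P *m A *m P = A.
Proof.
move=> hA hP KY AK0.
have AP : A *m P = A.
  by apply/eqP; rewrite eq_sym -subr_eq0 -{1}[A]mulmx1 -mulmxBr -KY mulmxA AK0 mul0mx.
have PA : P *m A = A by rewrite -{1}hP -{1}hA -ctrmx_mul AP hA.
by rewrite PA AP.
Qed.

End PositiveSemidefinite.

Lemma ord2_cases (i : 'I_2) : i = ord0 \/ i = lift ord0 ord0.
Proof. by case: (unliftP ord0 i) => [i'|] ->; [right; rewrite (ord1 i') | left]. Qed.

Definition matrix_of_rows {C : nzRingType} {m n} (rows : seq (seq C)) : 'M[C]_(m, n) :=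
  \matrix_(i, j) nth 0 (nth [::] rows i) j.

Definition HmxC (C : numClosedFieldType) (X : C) : 'M[C]_4 := matrix_of_rows
  [:: [:: 1; - ('i * X); 'i * X; X];
      [:: 'i * X; 1; - ('i * X); X];
      [:: - ('i * X); 'i * X; 1; X];
      [:: X; X; X; 1]].

(* [s] stands for sqrt 3: [field] can use [s * s = 3] as a rewrite rule, but
   not the relation [x * x = 3^-1] satisfied by x = s / 3. *)
Section HmxC.
Variables (C : numClosedFieldType) (s : C).
Hypotheses (s_real : s^* = s) (s_sqr : s * s = 3).

Local Notation H := (HmxC (s / 3)).

Let W : 'M[C]_(4, 2) := matrix_of_rows
  [:: [:: s / 3; 2]; [:: s / 3; 'i * s - 1]; [:: s / 3; - ('i * s) - 1]; [:: 1; 0]].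

Let Z : 'M[C]_(2, 4) := matrix_of_rows
  [:: [:: s / 3; s / 3; s / 3; 1];
      [:: 3^-1; (- ('i * s) - 1) / 6; ('i * s - 1) / 6; 0]].

Let K : 'M[C]_(4, 2) := matrix_of_rows
  [:: [:: 1; 2]; [:: 1; - 1 - 'i * s]; [:: 1; - 1 + 'i * s]; [:: - s; 0]].

Let Y : 'M[C]_(2, 4) := matrix_of_rows
  [:: [:: 6^-1; 6^-1; 6^-1; - s / 6];
      [:: 6^-1; (- 1 + 'i * s) / 12; (- 1 - 'i * s) / 12; 0]].

Let HmxC_factor : H = W *m Z.
Proof.
apply/matrixP => -[[|[|[|[|//]]]] ?] -[[|[|[|[|//]]]] ?];
  rewrite !mxE !big_ord_recl big_ord0 !mxE /=; by field: (@mulCii C) s_sqr.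
Qed.

Let mulZW : Z *m W = 2%:M.
Proof.
apply/matrixP => -[[|[|//]] ?] -[[|[|//]] ?];
  rewrite !mxE !big_ord_recl big_ord0 !mxE /=; by field: (@mulCii C) s_sqr.
Qed.

Let mulZK : Z *m K = 0.
Proof.
apply/matrixP => -[[|[|//]] ?] -[[|[|//]] ?];
  rewrite !mxE !big_ord_recl big_ord0 !mxE /=; by field: (@mulCii C) s_sqr.
Qed.

Let mulKY : K *m Y = 1%:M - 2^-1 *: H.
Proof.
apply/matrixP => -[[|[|[|[|//]]]] ?] -[[|[|[|[|//]]]] ?];
  rewrite !mxE !big_ord_recl big_ord0 !mxE /=; by field: (@mulCii C) s_sqr.
Qed.

Lemma HmxC_hermitian : ctrmx H = H.
Proof.
apply/matrixP => -[[|[|[|[|//]]]] ?] -[[|[|[|[|//]]]] ?];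
  rewrite !mxE /= ?(rmorphN, rmorphM, rmorph1) /= ?(fmorphV, rmorph_nat) /= ?conjCi ?s_real //;
  ring.
Qed.

Lemma HmxC_diag i : H i i = 1.
Proof. by rewrite mxE; case: i => -[|[|[|[|//]]]]. Qed.

Let HmxC_ker : H *m K = 0.
Proof. by rewrite HmxC_factor -mulmxA mulZK mulmx0. Qed.

Let HmxC_sqr : H *m H = 2 *: H.
Proof.
by rewrite HmxC_factor mulmxA -(mulmxA W) mulZW mul_mx_scalar -scalemxAl.
Qed.

Lemma HmxC_psd : psdmx H.
Proof. exact: psd_hermitian_sqr (ltr0n _ 2) HmxC_hermitian HmxC_sqr. Qed.

Lemma HmxC_rank : \rank H = 2%N.
Proof.
apply/eqP; rewrite eqn_leq {1}HmxC_factor mulmx_max_rank /=.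
apply: (mulmx1_min_rank (M := 4^-1 *: Z) (N := W)).
rewrite HmxC_factor -!scalemxAl !mulmxA mulZW mul_scalar_mx -scalemxAl mulZW.
by rewrite !scale_scalar_mx; congr (_%:M); field.
Qed.

Let undiag (d : 'rV[C]_4) : 'M[C]_2 := matrix_of_rows
  [:: [:: d 0 3; (s * (2 * d 0 0 - d 0 1 - d 0 2) + 3 * 'i * (d 0 1 - d 0 2)) / 2];
      [:: (s * (2 * d 0 0 - d 0 1 - d 0 2) - 3 * 'i * (d 0 1 - d 0 2)) / 12;
          (d 0 0 + d 0 1 + d 0 2 - d 0 3) / 2]].

Let undiagK (N : 'M[C]_2) : undiag (\row_i (W *m N *m Z) i i) = N.
Proof.
apply/matrixP => i j; case: (ord2_cases i) => ->; case: (ord2_cases j) => ->;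
  rewrite !mxE /= !big_ord_recl !big_ord0 !mxE /= !big_ord_recl !big_ord0 !mxE /=;
  by field: (@mulCii C) s_sqr.
Qed.

Let WNZ_diag_const (N : 'M[C]_2) t :
  (forall i, (W *m N *m Z) i i = t) -> N = t%:M.
Proof.
move=> dN; rewrite -[N]undiagK (_ : \row_i _ = const_mx t); last first.
  by apply/rowP => i; rewrite [LHS]mxE dN mxE.
by apply/matrixP => -[[|[|//]] ?] -[[|[|//]] ?]; rewrite !mxE /=; field.
Qed.

Lemma HmxC_face (A B : 'M[C]_4) :
  Mplus_e A -> psdmx B -> H = A + B -> A = A 0 0 *: H.
Proof.
move=> [psdA diagA] psdB HAB.
have AK : A *m K = 0.
  by apply: (psdD_mul_eq0 psdA psdB); rewrite -HAB HmxC_ker.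
have P_herm : ctrmx (2^-1 *: H) = 2^-1 *: H.
  by rewrite ctrmxZ HmxC_hermitian fmorphV rmorph_nat.
pose N := (2^-1 * 2^-1) *: (Z *m A *m W).
have AE : A = W *m N *m Z.
  rewrite -{1}(hermitian_proj_sandwich psdA.1 P_herm mulKY AK) HmxC_factor.
  by rewrite /N -!scalemxAl -!scalemxAr -!scalemxAl scalerA !mulmxA.
have N_const : N = (A 0 0)%:M.
  by apply: WNZ_diag_const => i; rewrite -AE.
by rewrite {1}AE N_const mul_mx_scalar -scalemxAl HmxC_factor.
Qed.

End HmxC.

Lemma in_ray_scale (R : realType) n (v : 'M[R[i]]_n) (z : R[i]) :
  0 <= z -> in_ray v (z *: v).
Proof.
move=> z_ge0; exists (complex.Re z).
by rewrite -ler0c RRe_real ?ger0_real.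
Qed.

Theorem mainTheorem10 (R : realType) :
  let x : R := 1 / Num.sqrt 3 in
  \rank (Hmx x) = 2%N /\ extremal_ray (@Mplus_e R[i] 4) (Hmx x).
Proof.
move=> x; pose s : R[i] := (Num.sqrt 3)%:C%C.
have sqrt3_sqr : Num.sqrt 3 * Num.sqrt 3 = 3 :> R by rewrite -expr2 sqr_sqrtr ?ler0n.
have s_real : s^* = s by exact: conjc_real.
have s_sqr : s * s = 3 by rewrite -rmorphM sqrt3_sqr rmorph_nat.
have -> : Hmx x = HmxC (s / 3).
  (* [Hmx x] and [HmxC x%:C] are convertible, ['i%C] being the ['i] of [R[i]]. *)
  rewrite (_ : s / 3 = x%:C%C) //.
  rewrite -[3 in LHS](rmorph_nat (real_complex R)) -fmorph_div; congr (_%:C%C).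
  have sqrt3_neq0 : Num.sqrt 3 != 0 :> R by rewrite sqrtr_eq0 -ltNge ltr0n.
  by rewrite /x; field: sqrt3_sqr.
split; first exact: HmxC_rank.
split; first by split; [exact: HmxC_psd | move=> i j; rewrite !HmxC_diag].
split.
  by apply/eqP => /matrixP/(_ 0 0); rewrite HmxC_diag mxE => /eqP; rewrite oner_eq0.
move=> A B cA cB HAB.
have HBA : HmxC (s / 3) = B + A by rewrite addrC.
rewrite (HmxC_face s_real s_sqr cA cB.1 HAB) (HmxC_face s_real s_sqr cB cA.1 HBA).
by split; apply: in_ray_scale; apply: psd_diag_ge0; [exact: cA.1 | exact: cB.1].
Qed.
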